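(* Let $(\mathcal{X},\kappa)$ be a finite similarity space with Gram matrix $\mathbf{K}$, and assume that the GAIT entropy $\mathbb{P}\mapsto\mathbb{H}^{\mathbf{K}}[\mathbb{P}]$ is concave on the probability simplex over $\mathcal{X}$. Let $\mathcal{Y}$ be a finite set and $(X,Y)$ a random pair with values in $\mathcal{X}\times\mathcal{Y}$. Then $$\mathbb{H}^{\mathbf{K},\mathbf{I}}[X\mid Y]\le\mathbb{H}^{\mathbf{K}}[X].$$
   Context: A finite similarity space $(\mathcal{X},\kappa)$ is a finite set with a symmetric $\kappa:\mathcal{X}\times\mathcal{X}\to[0,1]$ with $\kappa(x,x)=1$; its Gram matrix is $\mathbf{K}_{x,y}=\kappa(x,y)$. For a distribution $\mathbb{P}$ on $\mathcal{X}$, $(\mathbf{K}\mathbb{P})(x)=\sum_y\kappa(x,y)\mathbb{P}(y)$ and the GAIT entropy is $\mathbb{H}^{\mathbf{K}}[\mathbb{P}]=-\sum_x\mathbb{P}(x)\log(\mathbf{K}\mathbb{P})(x)$ (with $0\log0=0$); $\mathbb{H}^{\mathbf{K}}[X]$ is the GAIT entropy of the law of $X$. $\mathbf{I}$ denotes the identity kernel on $\mathcal{Y}$ ($1$ on the diagonal, $0$ elsewhere). For kernels $\kappa$, $\lambda$ with Gram matrices $\mathbf{K},\mathbf{\Lambda}$, $\mathbb{H}^{\mathbf{K}\otimes\mathbf{\Lambda}}[X,Y]$ is the GAIT entropy of the joint law of $(X,Y)$ with respect to the product kernel $\kappa(x,x')\lambda(y,y')$, and $\mathbb{H}^{\mathbf{K},\mathbf{\Lambda}}[X\mid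 Y]=\mathbb{H}^{\mathbf{K}\otimes\mathbf{\Lambda}}[X,Y]-\mathbb{H}^{\mathbf{\Lambda}}[Y]$. *)

From mathcomp Require Import all_boot all_order all_algebra.
From mathcomp Require Import all_classical all_reals all_analysis.
Set Implicit Arguments. Unset Strict Implicit. Unset Printing Implicit Defensive.
Import Order.TTheory GRing.Theory Num.Theory.
Local Open Scope ring_scope.

Definition similarity {R : realType} {T : finType} (k : T -> T -> R) : Prop :=
  (forall x y, k x y = k y x) /\ (forall x y, 0 <= k x y <= 1) /\ (forall x, k x x = 1).

Definition is_distr {R : realType} {T : finType} (P : T -> R) : Prop :=
  (forall x, 0 <= P x) /\ \sum_x P x = 1.

Definition Kmul {R : realType} {T : finType} (k : T -> T -> R) (P : T -> R) (x : T) : R :=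
  \sum_y k x y * P y.

(* GAIT entropy, with the convention 0 log 0 = 0 (terms with P x = 0 are dropped). *)
Definition gait {R : realType} {T : finType} (k : T -> T -> R) (P : T -> R) : R :=
  - \sum_(x | P x != 0) P x * ln (Kmul k P x).

Definition idker {R : realType} {T : finType} (y y' : T) : R := (y == y')%:R.

Definition prodker {R : realType} {X Y : finType} (k : X -> X -> R) (l : Y -> Y -> R)
  (p q : X * Y) : R := k p.1 q.1 * l p.2 q.2.

Definition marg1 {R : realType} {X Y : finType} (P : X * Y -> R) (x : X) : R :=
  \sum_y P (x, y).
Definition marg2 {R : realType} {X Y : finType} (P : X * Y -> R) (y : Y) : R :=
  \sum_x P (x, y).

Definition cond_gait {R : realType} {X Y : finType} (k : X -> X -> R) (l : Y -> Y -> R)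
  (P : X * Y -> R) : R :=
  gait (prodker k l) P - gait l (marg2 P).

Definition gait_concave {R : realType} {T : finType} (k : T -> T -> R) : Prop :=
  forall (P Q : T -> R) (t : R), is_distr P -> is_distr Q -> 0 <= t <= 1 ->
    t * gait k P + (1 - t) * gait k Q <= gait k (fun x => t * P x + (1 - t) * Q x).

From mathcomp Require Import all_boot all_order all_algebra.
From mathcomp Require Import all_classical all_reals all_analysis.
From mathcomp Require Import ring.
Set Implicit Arguments. Unset Strict Implicit. Unset Printing Implicit Defensive.
Import Order.TTheory GRing.Theory Num.Theory.
Local Open Scope ring_scope.

(* Because the kernel on Y is the identity, the product kernel acts fibrewise,
   so (K (x) I) P (x, y) = p(y) (K P(.|y))(x) with p the law of Y; taking
   logarithms splits off H^I[Y] and leaves the conditional entropy equal to the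
   p-average of the entropies H^K[P(.|y)] of the conditional laws.  These laws
   mix, with weights p, to the law of X, so Jensen's inequality for the concave
   entropy concludes. *)

Section ConcaveJensen.

Variables (R : realType) (T I : finType) (f : (T -> R) -> R).
Hypothesis f_concave : forall (P Q : T -> R) (t : R),
  is_distr P -> is_distr Q -> 0 <= t <= 1 ->
  t * f P + (1 - t) * f Q <= f (fun x => t * P x + (1 - t) * Q x).

Lemma concave_mix2 (a b : R) (P Q : T -> R) :
  0 < a -> 0 < b -> is_distr P -> is_distr Q ->
  a * f P + b * f Q <= (a + b) * f (fun x => (a * P x + b * Q x) / (a + b)).
Proof.
move=> a_gt0 b_gt0 dP dQ.
have ab_neq0 : a + b != 0 by rewrite gt_eqF // addr_gt0.
have t01 : 0 <= a / (a + b) <= 1.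
  apply/andP; split; first by rewrite divr_ge0 ?addr_ge0 ?ltW.
  by rewrite ler_pdivrMr ?mul1r ?lerDl ?addr_gt0 ?ltW.
have -> : (fun x => (a * P x + b * Q x) / (a + b))
        = (fun x => a / (a + b) * P x + (1 - a / (a + b)) * Q x).
  by apply: funext => x; field.
have -> : a * f P + b * f Q
        = (a + b) * (a / (a + b) * f P + (1 - a / (a + b)) * f Q) by field.
by apply: ler_wpM2l; [rewrite addr_ge0 ?ltW | exact: f_concave].
Qed.

Variables (w : I -> R) (Q : I -> T -> R).
Hypothesis w_ge0 : forall i, 0 <= w i.
Hypothesis Q_distr : forall i, w i != 0 -> is_distr (Q i).

Let mix (s : seq I) (x : T) : R := \sum_(i <- s) w i * Q i x.

Let wQ_ge0 i x : 0 <= w i * Q i x.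
Proof.
have [-> | wi_neq0] := eqVneq (w i) 0; first by rewrite mul0r.
by rewrite mulr_ge0 //; case: (Q_distr wi_neq0).
Qed.

Let sum_wQ i : \sum_x w i * Q i x = w i.
Proof.
have [-> | wi_neq0] := eqVneq (w i) 0; first by rewrite big1 // => x; rewrite mul0r.
by rewrite -mulr_sumr; case: (Q_distr wi_neq0) => _ ->; rewrite mulr1.
Qed.

Let sum_mix s : \sum_x mix s x = \sum_(i <- s) w i.
Proof. by rewrite exchange_big; apply: eq_bigr => i _; rewrite sum_wQ. Qed.

Lemma concave_jensen_seq (s : seq I) :
  \sum_(i <- s) w i * f (Q i)
    <= (\sum_(i <- s) w i) * f (fun x => mix s x / \sum_(i <- s) w i).
Proof.
elim: s => [|i s IH]; first by rewrite !big_nil mul0r.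
have mix_cons x : mix (i :: s) x = w i * Q i x + mix s x by rewrite /mix big_cons.
rewrite !big_cons; under [X in _ <= _ * f X]eq_fun do rewrite mix_cons.
set W := \sum_(j <- s) w j in IH *.
have W_ge0 : 0 <= W by rewrite sumr_ge0.
have [wi0 | wi_neq0] := eqVneq (w i) 0.
  rewrite wi0 mul0r !add0r.
  by under [X in _ <= _ * f X]eq_fun do rewrite mul0r add0r.
have wi_gt0 : 0 < w i by rewrite lt0r wi_neq0 w_ge0.
have [W0 | W_neq0] := eqVneq W 0.
  have mix0 x : mix s x = 0.
    apply: (psumr_eq0P (P := predT)) => // [y _ |]; [exact: sumr_ge0 | by rewrite sum_mix].
  rewrite W0 mul0r in IH; rewrite W0 addr0.
  under [X in _ <= _ * f X]eq_fun do rewrite mix0 addr0 mulrC mulKf //.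
  by rewrite gerDl.
have W_gt0 : 0 < W by rewrite lt0r W_neq0.
have mix_distr : is_distr (fun x => mix s x / W).
  by split=> [x|]; rewrite ?divr_ge0 ?sumr_ge0 // -mulr_suml sum_mix divff.
apply: le_trans (_ : w i * f (Q i) + W * f (fun x => mix s x / W) <= _).
  by rewrite lerD2l.
apply: le_trans (concave_mix2 wi_gt0 W_gt0 (Q_distr wi_neq0) mix_distr) _.
by under [X in _ * f X <= _]eq_fun do rewrite mulrCA divff // mulr1.
Qed.

Lemma concave_jensen : \sum_i w i = 1 ->
  \sum_i w i * f (Q i) <= f (fun x => \sum_i w i * Q i x).
Proof.
move=> w_sum1; have := concave_jensen_seq (index_enum I).
by rewrite w_sum1 mul1r; under [X in _ <= f X]eq_fun do rewrite divr1.
Qed.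

End ConcaveJensen.

Lemma gaitE (R : realType) (T : finType) (k : T -> T -> R) (P : T -> R) :
  gait k P = - \sum_x P x * ln (Kmul k P x).
Proof.
rewrite /gait big_mkcond /=; congr (- _); apply: eq_bigr => x _.
by case: eqP => // ->; rewrite mul0r.
Qed.

Lemma sum_pairE (R : realType) (X Y : finType) (F : X * Y -> R) :
  \sum_z F z = \sum_y \sum_x F (x, y).
Proof. by rewrite exchange_big pair_big /=; apply: eq_bigr => -[]. Qed.

Lemma Kmul_idker (R : realType) (Y : finType) (p : Y -> R) (y : Y) :
  Kmul idker p y = p y.
Proof.
rewrite /Kmul (bigD1 y) //= /idker eqxx mul1r big1 ?addr0 // => y'.
by rewrite eq_sym => /negbTE ->; rewrite mul0r.
Qed.

Lemma Kmul_prodker_idker (R : realType) (X Y : finType) (k : X -> X -> R)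
    (P : X * Y -> R) (x : X) (y : Y) :
  Kmul (prodker k idker) P (x, y) = Kmul k (fun x' => P (x', y)) x.
Proof.
rewrite /Kmul sum_pairE exchange_big; apply: eq_bigr => x' _ /=.
rewrite (bigD1 y) //= /prodker /idker /= eqxx mulr1 big1 ?addr0 // => y'.
by rewrite eq_sym => /negbTE ->; rewrite mulr0 mul0r.
Qed.

Lemma Kmul_divr (R : realType) (T : finType) (k : T -> T -> R) (P : T -> R)
    (c : R) (x : T) :
  Kmul k (fun x' => P x' / c) x = Kmul k P x / c.
Proof. by rewrite /Kmul mulr_suml; apply: eq_bigr => x' _; rewrite mulrA. Qed.

Lemma Kmul_gt0 (R : realType) (T : finType) (k : T -> T -> R) (P : T -> R) (x : T) :
  (forall x x', 0 <= k x x') -> (forall x, 0 < k x x) ->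
  (forall x, 0 <= P x) -> 0 < P x -> 0 < Kmul k P x.
Proof.
move=> k_ge0 k_diag P_ge0 Px_gt0.
rewrite /Kmul (bigD1 x) //=; apply: ltr_wpDr; last exact: mulr_gt0.
by apply: sumr_ge0 => x' _; rewrite mulr_ge0.
Qed.

(* Junk value 0 on fibres of mass 0, which carry weight 0 wherever the law is used. *)
Definition cond_law {R : realType} {X Y : finType} (P : X * Y -> R) (y : Y) (x : X) : R :=
  P (x, y) / marg2 P y.

Section ConditionalLaw.

Variables (R : realType) (X Y : finType) (P : X * Y -> R).
Hypothesis P_ge0 : forall z, 0 <= P z.

Lemma marg2_ge0 y : 0 <= marg2 P y.
Proof. exact: sumr_ge0. Qed.

Lemma marg2_eq0 x y : marg2 P y = 0 -> P (x, y) = 0.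
Proof. by move=> py0; apply: (psumr_eq0P (P := predT) (F := fun x => P (x, y))). Qed.

Lemma marg2_mul_cond_law x y : marg2 P y * cond_law P y x = P (x, y).
Proof.
have [py0 | py_neq0] := eqVneq (marg2 P y) 0; first by rewrite py0 mul0r marg2_eq0.
by rewrite /cond_law mulrC divfK.
Qed.

Lemma cond_law_distr y : marg2 P y != 0 -> is_distr (cond_law P y).
Proof.
by move=> py_neq0; split=> [x|]; rewrite ?divr_ge0 ?marg2_ge0 // -mulr_suml divff.
Qed.

Lemma marg2_distr : \sum_z P z = 1 -> is_distr (marg2 P).
Proof. by move=> P_sum1; split; [exact: marg2_ge0 | rewrite -P_sum1 sum_pairE]. Qed.

Lemma mix_cond_law : (fun x => \sum_y marg2 P y * cond_law P y x) = marg1 P.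
Proof. by apply: funext => x; apply: eq_bigr => y _; rewrite marg2_mul_cond_law. Qed.

Variable k : X -> X -> R.
Hypotheses (k_ge0 : forall x x', 0 <= k x x') (k_diag : forall x, 0 < k x x).

Lemma ln_Kmul_prodker_idker x y : P (x, y) != 0 ->
  ln (Kmul (prodker k idker) P (x, y))
    = ln (marg2 P y) + ln (Kmul k (cond_law P y) x).
Proof.
move=> Pxy_neq0.
have Pxy_gt0 : 0 < P (x, y) by rewrite lt0r Pxy_neq0 P_ge0.
have py_gt0 : 0 < marg2 P y.
  by rewrite lt0r marg2_ge0 andbT; apply: contra Pxy_neq0 => /eqP/marg2_eq0 ->.
have KPy_gt0 : 0 < Kmul k (fun x' => P (x', y)) x by apply: Kmul_gt0.
rewrite Kmul_prodker_idker /cond_law Kmul_divr -lnM ?posrE ?divr_gt0 //.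
by rewrite mulrC divfK ?gt_eqF.
Qed.

Lemma cond_gait_idkerE :
  cond_gait k idker P = \sum_y marg2 P y * gait k (cond_law P y).
Proof.
have -> : \sum_y marg2 P y * gait k (cond_law P y)
        = - \sum_y \sum_x P (x, y) * ln (Kmul k (cond_law P y) x).
  rewrite -sumrN; apply: eq_bigr => y _; rewrite gaitE mulrN mulr_sumr.
  by congr (- _); apply: eq_bigr => x _; rewrite mulrA marg2_mul_cond_law.
rewrite /cond_gait !gaitE sum_pairE.
under [in X in _ - X]eq_bigr do rewrite Kmul_idker.
have -> : \sum_y \sum_x P (x, y) * ln (Kmul (prodker k idker) P (x, y))
        = \sum_y (marg2 P y * ln (marg2 P y)
                  + \sum_x P (x, y) * ln (Kmul k (cond_law P y) x)).
  apply: eq_bigr => y _; rewrite {2}/marg2 mulr_suml -big_split /=.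
  apply: eq_bigr => x _; have [-> | Pxy_neq0] := eqVneq (P (x, y)) 0.
    by rewrite !mul0r addr0.
  by rewrite ln_Kmul_prodker_idker // mulrDr.
by rewrite big_split /=; ring.
Qed.

End ConditionalLaw.

Theorem theorem5 (R : realType) (X Y : finType) (k : X -> X -> R)
  (hk : similarity k) (hconc : gait_concave k)
  (PXY : X * Y -> R) (hP : is_distr PXY) :
  cond_gait k (@idker R Y) PXY <= gait k (marg1 PXY).
Proof.
case: hP => P_ge0 P_sum1; case: hk => _ [k01 k_diag].
have k_ge0 x x' : 0 <= k x x' by case/andP: (k01 x x').
have k_diag_gt0 x : 0 < k x x by rewrite k_diag.
case: (marg2_distr P_ge0 P_sum1) => py_ge0 py_sum1.
rewrite cond_gait_idkerE // -(mix_cond_law P_ge0).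
exact: concave_jensen hconc _ _ py_ge0 (cond_law_distr P_ge0) py_sum1.
Qed.
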